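(* Fix a node $\ell$ and the other nodes' probabilities $\mathbf{P}_{-\ell}\in[0,1]^{N-1}$, and write $\beta_\ell=e^{-\rho_{\ell2}}\prod_{k\neq\ell}(1-p_k)$. Let $p_\ell(1)\in[p_\ell^{min},1]$ and let $(v_\ell(t))_{t\ge1}$ be random variables such that, with $$p_\ell(t+1)=\max\{p_\ell^{min},\,p_\ell(t)+\kappa(t)v_\ell(t)\},$$ one has for all $t$: $|v_\ell(t)|\le M$ for a constant $M<\infty$, $v_\ell(t)\le 1-p_\ell(t)$, and $$\mathbb{E}\{v_\ell(t)\mid p_\ell(1),\dots,p_\ell(t)\}=e^{-\alpha_\ell p_\ell(t)}-p_\ell(t)\beta_\ell-p_\ell(t).$$ If the deterministic learning rates satisfy $\kappa(t)\in(0,1]$ for all $t$, $\sum_{t}\kappa(t)=\infty$ and $\sum_t\kappa(t)^2<\infty$, then $p_\ell(t)$ converges almost surely to the best response $p_\ell^{br}=\arg\max_{p\in[p_\ell^{min},1]}U_\ell(p;\mathbf{P}_{-\ell})$.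
   Context: Game $\mathcal{G}$: node $\ell$ has parameters $c_\ell>0$, $\rho_{\ell1}>0$, $\rho_{\ell2}>0$, $p_\ell^{min}\in(0,1)$, $\alpha_\ell=c_\ell\rho_{\ell1}$, and virtual utility $$U_\ell(p_\ell;\mathbf{P}_{-\ell})=-\frac{e^{-\alpha_\ell p_\ell}}{\alpha_\ell}-\frac{p_\ell^2}{2}\Big(1+e^{-\rho_{\ell2}}\prod_{k\ne\ell}(1-p_k)\Big)+\frac{1+\alpha_\ell}{\alpha_\ell}.$$ In the paper's learning algorithm, $v_\ell(t)=e^{-\rho_{\ell1}C_\ell^{av}(t)}-\frac{1}{(1+\Delta_\ell^{av}(t))e^{\rho_{\ell2}}}-p_\ell(t)$, where $C_\ell^{av}(t)$ and $\Delta_\ell^{av}(t)$ are node $\ell$'s empirical average transmission cost and empirical time-averaged age over frame $t$; the conditional-expectation hypothesis above is the idealization of this (large frame length) used in the paper. *)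

From HB Require Import structures.
From mathcomp Require Import all_boot all_order all_algebra.
From mathcomp Require Import all_classical all_reals all_analysis.
Set Implicit Arguments. Unset Strict Implicit. Unset Printing Implicit Defensive.
Import Order.TTheory GRing.Theory Num.Theory numFieldNormedType.Exports.
Local Open Scope ring_scope.

Definition beta_l (R : realType) (N : nat) (l : 'I_N) (P : 'I_N -> R) (rho2 : R) : R :=
  expR (- rho2) * \prod_(k < N | k != l) (1 - P k).

Definition U_l (R : realType) (N : nat) (l : 'I_N) (P : 'I_N -> R)
  (c rho1 rho2 : R) (p : R) : R :=
  let alpha := c * rho1 in
  - expR (- alpha * p) / alpha
  - (p ^+ 2 / 2) * (1 + beta_l l P rho2)
  + (1 + alpha) / alpha.

(* the learning iterates; index t = 0 here is the paper's t = 1 *)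
Fixpoint proc (R : realType) (T : Type) (pmin : R) (p1 : T -> R)
  (kappa : nat -> R) (v : nat -> T -> R) (t : nat) : T -> R :=
  match t with
  | 0 => p1
  | t'.+1 => fun w => Num.max pmin (proc pmin p1 kappa v t' w + kappa t' * v t' w)
  end.

(* Write Y_t = (p_t - p_br)^2 for the squared distance to the best response.
   Projecting onto [pmin, 1] does not increase it, and by strong concavity of
   U_l the mean field U_l'(p_t) of v_t pushes p_t towards p_br, so that
   Y_{t+1} <= (1 - kappa_t) Y_t + 2 kappa_t (p_t - p_br) xi_t + kappa_t^2 M^2
   with the noise xi_t = v_t - U_l'(p_t) centred given p_1, ..., p_t.
   Integrated over events of that sigma-algebra the noise term vanishes, and a
   Robbins-Siegmund type argument concludes: sum kappa_t = oo makes E Y_t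
   small infinitely often, while a maximal inequality for the process stopped
   when it first exceeds r, whose error is controlled by sum kappa_t^2 < oo,
   bounds the probability of exceeding r afterwards. *)

From HB Require Import structures.
From mathcomp Require Import all_boot all_order all_algebra.
From mathcomp Require Import all_classical all_reals all_analysis.
From mathcomp Require Import lra measurable_realfun.
Import Order.TTheory GRing.Theory Num.Theory numFieldNormedType.Exports.
Local Open Scope classical_set_scope.
Local Open Scope ring_scope.

Lemma sqr_maxB_le {R : realDomainType} {a b : R} (z : R) : a <= b ->
  (Num.max a z - b) ^+ 2 <= (z - b) ^+ 2.
Proof. by move=> ab; case: (leP a z) => // za; rewrite !expr2; nra. Qed.

Lemma norm_le_div_nat_eq0 {R : archiRealFieldType} (a K : R) :
  (forall n, (0 < n)%N -> `|a| <= K / n%:R) -> a = 0.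
Proof.
move=> bound; apply/eqP; rewrite -normr_le0 leNgt; apply/negP => a0.
pose n := (Num.truncn (K / `|a|)).+1.
have Kn : K / `|a| < n%:R := truncnS_gt (K / `|a|).
have n0 : 0 < n%:R :> R by rewrite ltr0n.
have := bound n isT; rewrite ler_pdivlMr // mulrC -ler_pdivlMr //.
by rewrite leNgt Kn.
Qed.

Section level_count.
Context {R : realFieldType}.

(* [h * level_count h x n] approximates [x] from below by a staircase of step [h]. *)
Definition level_count (h x : R) (n : nat) : R :=
  \sum_(k < n) (if k.+1%:R * h <= x then 1 else 0).

Lemma level_count_bounds (h x : R) n : 0 < h -> 0 <= x ->
  [/\ level_count h x n <= n%:R, h * level_count h x n <= x &
      x - h <= h * level_count h x n \/ level_count h x n = n%:R].
Proof.
move=> h0 x0; elim: n => [|n [S1 S2 S3]].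
  by rewrite /level_count big_ord0 mulr0; split => //; right.
rewrite /level_count big_ord_recr /= -/(level_count h x n) -[n.+1]addn1 natrD.
set S := level_count h x n in S1 S2 S3 *.
case: ifP => hn.
- have : h * S <= h * n%:R by apply: ler_wpM2l => //; lra.
  rewrite mulrDr mulr1 mulrC; rewrite mulrDl mul1r in hn.
  by split; [lra | lra | case: S3 => S3; [left; lra | right; rewrite S3]].
- move/negbT: hn; rewrite -ltNge mulrC => hn.
  by rewrite addr0; split; [lra | by [] | left; case: S3 => // ->; lra].
Qed.

Lemma level_count_approx n (x : R) : (0 < n)%N -> 0 <= x <= 1 ->
  `|x - n%:R^-1 * level_count n%:R^-1 x n| <= n%:R^-1.
Proof.
move=> n0 /andP[x0 x1].
have h0 : 0 < n%:R^-1 :> R by rewrite invr_gt0 ltr0n.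
have hn : n%:R^-1 * n%:R = 1 :> R by rewrite mulVf // pnatr_eq0 -lt0n.
have [_ S2 S3] := level_count_bounds _ x n h0 x0.
rewrite ler_norml; apply/andP; split; first lra.
by case: S3 => [|->]; lra.
Qed.

End level_count.

Lemma expR_tangent_le {R : realType} (x y : R) : expR x * (1 + (y - x)) <= expR y.
Proof.
have -> : expR y = expR (y - x) * expR x by rewrite -expRD subrK.
by rewrite mulrC ler_wpM2r ?expR_ge0 ?expR_ge1Dx.
Qed.

Lemma cvg_sqrB0 {R : realType} (u : nat -> R) (a : R) :
  (u t - a) ^+ 2 @[t --> \oo] --> 0 -> u t @[t --> \oo] --> a.
Proof.
move=> /cvgrPdist_lt u2; apply/cvgrPdist_lt => e e0.
apply: filterS (u2 _ (mulr_gt0 e0 e0)) => t.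
rewrite sub0r normrN normrX distrC -expr2 => lt2.
by rewrite -(@ltr_pXn2r _ 2) ?nnegrE // ltW.
Qed.

(* The derivative of [U_l] in [p]: the conditional mean of [v_l(t)] is
   [dU_l (p_l(t))]. *)
Definition dU_l {R : realType} {N : nat} (l : 'I_N) (P : 'I_N -> R)
  (c rho1 rho2 p : R) : R :=
  expR (- (c * rho1) * p) - p * beta_l l P rho2 - p.

Section utility.
Context {R : realType} {N : nat} {l : 'I_N} {P : 'I_N -> R} {c rho1 rho2 : R}.
Hypothesis alpha0 : 0 < c * rho1.
Let U := U_l l P c rho1 rho2.
Let dU := dU_l l P c rho1 rho2.
Let beta := beta_l l P rho2.

Lemma beta_l_ge0 : (forall k, k != l -> P k <= 1) -> 0 <= beta.
Proof.
move=> P_le1; apply: mulr_ge0; first exact: expR_ge0.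
by apply: prodr_ge0 => k kl; rewrite subr_ge0 P_le1.
Qed.

Lemma U_l_le_tangent x y :
  U y <= U x + dU x * (y - x) - (1 + beta) * (y - x) ^+ 2 / 2.
Proof.
rewrite /U /U_l /dU /dU_l -/beta; set a := c * rho1.
have := expR_tangent_le (- a * x) (- a * y).
set Ex := expR (- a * x); set Ey := expR (- a * y) => tangent.
have : - Ey / a <= - Ex / a + Ex * (y - x).
  rewrite ler_pdivrMr // mulrDl divfK ?gt_eqF //; nra.
nra.
Qed.

(* Strong concavity of [U] turns the maximality of [y] into a drift of the
   gradient towards [y]. *)
Lemma dU_l_drift x y : 0 <= beta -> U x <= U y ->
  (x - y) * dU x <= - (x - y) ^+ 2 / 2.
Proof.
move=> b0 Uxy; have := U_l_le_tangent x y.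
have : 0 <= beta * (x - y) ^+ 2 by rewrite mulr_ge0 ?sqr_ge0.
by rewrite !expr2; nra.
Qed.

Lemma dU_l_bound x : 0 <= beta -> 0 <= x <= 1 -> `|dU x| <= 2 + beta.
Proof.
move=> b0 /andP[x0 x1]; rewrite /dU /dU_l -/beta.
have E0 := expR_gt0 (- (c * rho1) * x).
have E1 : expR (- (c * rho1) * x) <= 1 by rewrite expR_le1 mulNr oppr_le0 mulr_ge0 // ltW.
by rewrite ler_norml; apply/andP; split; nra.
Qed.

Lemma measurable_dU_l : measurable_fun setT dU.
Proof.
apply: measurable_funB; first apply: measurable_funB.
- apply: measurableT_comp; first exact: measurable_expR.
  by apply: measurable_funM; [exact: measurable_cst | exact: measurable_id].
- by apply: measurable_funM; [exact: measurable_id | exact: measurable_cst].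
- exact: measurable_id.
Qed.

End utility.

Section bounded_mfun.
Context {R : realType} {d : measure_display} {T : measurableType d}.
Implicit Types f g : T -> R.

Definition bounded_mfun g := measurable_fun setT g /\ exists K, forall w, `|g w| <= K.

Lemma bounded_mfunP {g K} : measurable_fun setT g -> (forall w, `|g w| <= K) ->
  bounded_mfun g.
Proof. by move=> mg gK; split => //; exists K. Qed.

Lemma bounded_mfun_cst (r : R) : bounded_mfun (cst r).
Proof. by split; [exact: measurable_cst | exists `|r|]. Qed.

Lemma bounded_mfunD {f g} : bounded_mfun f -> bounded_mfun g -> bounded_mfun (f \+ g).
Proof.
move=> [mf [Kf fK]] [mg [Kg gK]]; split; first exact: measurable_funD.
by exists (Kf + Kg) => w; exact: le_trans (ler_normD _ _) (lerD (fK w) (gK w)).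
Qed.

Lemma bounded_mfunB {f g} : bounded_mfun f -> bounded_mfun g -> bounded_mfun (f \- g).
Proof.
move=> [mf [Kf fK]] [mg [Kg gK]]; split; first exact: measurable_funB.
by exists (Kf + Kg) => w; exact: le_trans (ler_normB _ _) (lerD (fK w) (gK w)).
Qed.

Lemma bounded_mfunM {f g} : bounded_mfun f -> bounded_mfun g -> bounded_mfun (f \* g).
Proof.
move=> [mf [Kf fK]] [mg [Kg gK]]; split; first exact: measurable_funM.
by exists (Kf * Kg) => w; rewrite normrM; exact: ler_pM.
Qed.

Lemma bounded_mfun_sum {g : nat -> T -> R} n : (forall k, bounded_mfun (g k)) ->
  bounded_mfun (fun w => \sum_(k < n) g k w).
Proof.
move=> bg; elim: n => [|n IH].
  by under eq_fun do rewrite big_ord0; exact: bounded_mfun_cst.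
by under eq_fun do rewrite big_ord_recr; exact: bounded_mfunD.
Qed.

End bounded_mfun.

Section bounded_integration.
Context {R : realType} {d : measure_display} {T : measurableType d}.
Variable Pr : probability T R.

Lemma probability_fin_num {A : set T} : measurable A -> Pr A \is a fin_num.
Proof.
move=> mA; rewrite ge0_fin_numE //.
by rewrite (le_lt_trans (probability_le1 Pr mA)) // ltry.
Qed.

Lemma fine_probability_bounds {A : set T} : measurable A ->
  0 <= fine (Pr A) <= 1.
Proof.
move=> mA; apply/andP; split; first exact: fine_ge0.
by rewrite -lee_fin fineK ?probability_le1 ?probability_fin_num.
Qed.

Lemma fine_probabilityU {A B : set T} : measurable A -> measurable B ->
  A `&` B = set0 -> fine (Pr (A `|` B)) = fine (Pr A) + fine (Pr B).
Proof.
by move=> mA mB AB; rewrite measureU // fineD //; exact: probability_fin_num.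
Qed.

Lemma bounded_mfun_integrable {g : T -> R} {A : set T} : measurable A ->
  bounded_mfun g -> Pr.-integrable A (EFin \o g).
Proof.
move=> mA [mg [K gK]]; apply: measurable_bounded_integrable => //.
- by apply: (le_lt_trans (probability_le1 Pr mA)); rewrite ltry.
- exact: measurable_funS mg.
- rewrite /bounded_near; near=> K' => w _ /=; apply: (le_trans (gK w)); near: K'.
  by apply: nbhs_pinfty_ge; rewrite num_real.
Unshelve. all: by end_near.
Qed.

Lemma normr_Rintegral_le {g : T -> R} {K : R} {A : set T} : measurable A ->
  measurable_fun setT g -> (forall w, `|g w| <= K) ->
  `|\int[Pr]_(w in A) g w| <= K.
Proof.
move=> mA mg gK; have K0 : 0 <= K := le_trans (normr_ge0 _) (gK point).
have ig := bounded_mfun_integrable mA (bounded_mfunP mg gK).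
apply: le_trans (le_normr_Rintegral mA ig) _.
apply: le_trans (le_Rintegral mA (integrable_norm ig)
  (bounded_mfun_integrable mA (bounded_mfun_cst K)) (fun w _ => gK w)) _.
rewrite Rintegral_cst // ler_piMr //.
by have /andP[] := fine_probability_bounds mA.
Qed.

Lemma Rintegral_sum {A : set T} {g : nat -> T -> R} n : measurable A ->
  (forall k, bounded_mfun (g k)) ->
  \int[Pr]_(w in A) (\sum_(k < n) g k w) = \sum_(k < n) \int[Pr]_(w in A) g k w.
Proof.
move=> mA bg; elim: n => [|n IH].
  by under eq_Rintegral do rewrite big_ord0; rewrite big_ord0 Rintegral_cst // mul0r.
under eq_Rintegral do rewrite big_ord_recr.
rewrite big_ord_recr /= RintegralD ?IH //; apply: bounded_mfun_integrable => //.
exact: bounded_mfun_sum.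
Qed.

End bounded_integration.

Section centered_noise.
Context {R : realType} {d : measure_display} {T : measurableType d}.
Variable Pr : probability T R.
Context {F : set (set T)}.
Hypotheses (FI : setI_closed F) (Fm : F `<=` measurable).
Context {xi : T -> R} {K : R}.
Hypotheses (mxi : measurable_fun setT xi) (xiK : forall w, `|xi w| <= K)
  (xi0 : forall A, F A -> \int[Pr]_(w in A) xi w = 0).

Lemma Rintegral_level_mul {g : T -> R} x {A} : F [set w | x <= g w] -> F A ->
  \int[Pr]_(w in A) (if x <= g w then xi w else 0) = 0.
Proof.
move=> Fx FA; rewrite -[RHS](xi0 _ (FI _ _ FA Fx)) Rintegral_mkcondr.
apply: eq_Rintegral => w _; rewrite /patch.
have [gx|gx] := boolP (x <= g w); first by rewrite mem_set.
by rewrite memNset //; exact/negP.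
Qed.

(* [g] is approximated uniformly within [1/n] by staircases built on its level
   sets, against each of which [xi] integrates to zero. *)
Lemma Rintegral_mul_centered {g : T -> R} {A} :
  measurable_fun setT g -> (forall w, 0 <= g w <= 1) ->
  (forall B, measurable B -> F (g @^-1` B)) -> F A ->
  \int[Pr]_(w in A) (g w * xi w) = 0.
Proof.
move=> mg g01 Fg FA; have mA := Fm _ FA.
have Fge x : F [set w | x <= g w].
  have := Fg _ (measurable_itv `[x, +oo[); congr F.
  by apply/seteqP; split => w /=; rewrite in_itv /= andbT.
have K0 : 0 <= K := le_trans (normr_ge0 _) (xiK point).
have bxi : bounded_mfun xi := bounded_mfunP mxi xiK.
have bg : bounded_mfun g.
  by split => //; exists 1 => w; have /andP[g0 g1] := g01 w; rewrite ger0_norm.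
apply: (@norm_le_div_nat_eq0 _ _ K) => n n0.
set h := (n%:R : R)^-1.
have h0 : 0 < h by rewrite invr_gt0 ltr0n.
pose ind k w := if k.+1%:R * h <= g w then xi w else 0.
have bind k : bounded_mfun (ind k).
  split; last by exists K => w; rewrite /ind; case: ifP; rewrite ?normr0.
  apply: measurable_fun_ifT; [|exact: mxi|exact: measurable_cst].
  apply: measurable_fun_ler; [exact: measurable_cst|exact: mg].
pose D w := g w * xi w - h * \sum_(k < n) ind k w.
have bD : bounded_mfun D.
  apply: bounded_mfunB; first exact: bounded_mfunM.
  by apply: bounded_mfunM; [exact: bounded_mfun_cst | exact: bounded_mfun_sum].
have DK w : `|D w| <= K * h.
  have -> : D w = xi w * (g w - h * level_count h (g w) n).
    rewrite /D /level_count mulrBr [xi w * g w]mulrC mulrCA.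
    congr (_ - h * _); rewrite mulr_sumr; apply: eq_bigr => k _.
    by rewrite /ind; case: ifP; rewrite !(mulr1, mulr0).
  by rewrite normrM; apply: ler_pM => //; exact: level_count_approx.
have -> : \int[Pr]_(w in A) (g w * xi w) =
    \int[Pr]_(w in A) D w + h * \int[Pr]_(w in A) (\sum_(k < n) ind k w).
  rewrite -RintegralZl //; last exact/bounded_mfun_integrable/bounded_mfun_sum.
  rewrite -RintegralD //; first by apply: eq_Rintegral => w _; rewrite /D subrK.
    exact: bounded_mfun_integrable.
  apply: bounded_mfun_integrable => //.
  by apply: bounded_mfunM; [exact: bounded_mfun_cst | exact: bounded_mfun_sum].
rewrite Rintegral_sum // big1 ?mulr0 ?addr0 => [|k _]; last first.
  exact: Rintegral_level_mul (Fge _) FA.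
exact: normr_Rintegral_le mA bD.1 DK.
Qed.

End centered_noise.

Section robbins_siegmund.
Context {R : realType} {d : measure_display} {T : measurableType d}.
Variable Pr : probability T R.
Context {F : nat -> set (set T)}.
Hypotheses (FT : forall t, F t setT) (FI : forall {t}, setI_closed (F t))
  (Fm : forall {t}, F t `<=` measurable) (Fnd : forall t, F t `<=` F t.+1).
Context {Y : nat -> T -> R} {B C : R} {kappa : nat -> R}.
Hypotheses (mY : forall t, measurable_fun setT (Y t))
  (Y0 : forall t w, 0 <= Y t w) (YB : forall t w, Y t w <= B)
  (FY : forall t (E : set R), measurable E -> F t (Y t @^-1` E)) (C0 : 0 <= C)
  (kappa01 : forall t, 0 <= kappa t <= 1)
  (sum_kappa : (fun n => \sum_(k < n) kappa k) @ \oo --> +oo)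
  (sum_kappa2 : cvg ((fun n => \sum_(k < n) kappa k ^+ 2) @ \oo))
  (contract : forall {t A}, F t A -> \int[Pr]_(w in A) Y t.+1 w <=
     (1 - kappa t) * \int[Pr]_(w in A) Y t w + kappa t ^+ 2 * C * fine (Pr A)).

Let S n := \sum_(k < n) kappa k.
Let S2 n := \sum_(k < n) kappa k ^+ 2.
Let y t := \int[Pr]_(w in setT) Y t w.

Lemma Y_integrable t A : measurable A -> Pr.-integrable A (EFin \o Y t).
Proof.
move=> mA; apply: bounded_mfun_integrable mA _.
by split => //; exists B => w; rewrite ger0_norm.
Qed.

Lemma y_ge0 t : 0 <= y t.
Proof. exact: Rintegral_ge0. Qed.

Lemma y_contract t : y t.+1 <= (1 - kappa t) * y t + kappa t ^+ 2 * C.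
Proof. by have := contract (FT t); rewrite probability_setT /= mulr1. Qed.

Lemma S2_le_lim n : S2 n <= limn S2.
Proof.
apply: nondecreasing_cvgn_le sum_kappa2 n; apply/nondecreasing_seqP => k.
by rewrite /S2 big_ord_recr /= lerDl sqr_ge0.
Qed.

Lemma S2_tail {eta} : 0 < eta ->
  exists m0, forall m, (m0 <= m)%N -> limn S2 - S2 m <= eta.
Proof.
move=> eta0; move/cvgrPdist_lt: sum_kappa2 => /(_ eta eta0) [m0 _ Hm0].
by exists m0 => m /Hm0 /= h; have := ler_norm (limn S2 - S2 m); lra.
Qed.

(* If [y] stayed above [dl] from time [m] on, it would decrease by [dl] times
   the divergent [S] up to a summable error. *)
Lemma y_small_often {dl} m : 0 < dl -> exists2 t, (m <= t)%N & y t < dl.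
Proof.
move=> dl0; apply: contrapT => large.
have ge_dl t : (m <= t)%N -> dl <= y t.
  by move=> mt; rewrite leNgt; apply/negP => ydl; apply: large; exists t.
have decay k : y (m + k) + dl * (S (m + k) - S m) <= y m + C * (S2 (m + k) - S2 m).
  elim: k => [|k IH]; first by rewrite addn0 !subrr !mulr0 !addr0.
  rewrite addnS /S /S2 !big_ord_recr /= -/(S (m + k)) -/(S2 (m + k)) -/(S m) -/(S2 m).
  have := y_contract (m + k); have := ge_dl _ (leq_addr k m).
  have /andP[k0 k1] := kappa01 (m + k); nra.
pose A := S m + (y m + C * limn S2) / dl + 1.
move/cvgryPge: sum_kappa => /(_ A) [N0 _ HN].
have := HN (m + N0)%N (leq_addl _ _); rewrite /= -/(S (m + N0)) /A.
have := decay N0; have := y_ge0 (m + N0); have := S2_le_lim (m + N0).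
have : 0 <= S2 m by apply: sumr_ge0 => k _; exact: sqr_ge0.
move=> S2m S2N yN dec SN.
have CS2 : C * (S2 (m + N0) - S2 m) <= C * limn S2 by apply: ler_wpM2l => //; lra.
have : dl * (S (m + N0) - S m) <= y m + C * limn S2 by lra.
by rewrite -ler_pdivlMl // mulrC; lra.
Qed.

Let level t r := [set w | Y t w < r].

Lemma F_level t r : F t (level t r).
Proof. exact: FY t _ (measurable_itv `]-oo, r[). Qed.

Let stay m r k := [set w | forall i, (i < k)%N -> Y (m + i) w < r].

Lemma stay0 m r : stay m r 0 = setT.
Proof. by apply/seteqP; split => w // _ i. Qed.

Lemma stayS m r k : stay m r k.+1 = stay m r k `&` level (m + k) r.
Proof.
apply/seteqP; split => w /=; first by move=> H; split => [i /ltnW|]; apply: H.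
by move=> [H1 H2] i; rewrite ltnS leq_eqVlt => /predU1P[->|/H1].
Qed.

Lemma F_stay m r k : F (m + k) (stay m r k).
Proof.
elim: k => [|k IH]; first by rewrite stay0 addn0.
by rewrite stayS addnS; apply: FI; apply: Fnd; [exact: IH | exact: F_level].
Qed.

Lemma measurable_stay m r k : measurable (stay m r k).
Proof. exact: Fm _ (F_stay m r k). Qed.

(* Markov's inequality on the part of [A] that leaves [level j r], plus one
   contraction step on the part that stays. *)
Lemma exit_step {j} r {A} : F j A ->
  r * fine (Pr (A `\` level j r)) + \int[Pr]_(w in A `&` level j r) Y j.+1 w
  <= \int[Pr]_(w in A) Y j w + kappa j ^+ 2 * C.
Proof.
move=> FA; have mA := Fm _ FA; have FAL := FI _ _ FA (F_level j r).
have mAL := Fm _ FAL; have mAD : measurable (A `\` level j r).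
  by apply: measurableD => //; exact: Fm _ (F_level j r).
have -> : \int[Pr]_(w in A) Y j w = \int[Pr]_(w in A `&` level j r) Y j w
    + \int[Pr]_(w in A `\` level j r) Y j w.
  rewrite -Rintegral_setU ?setUIDK //; first exact: Y_integrable.
  by apply/disj_set2P; rewrite setDE setIACA setICr setI0.
have markov : r * fine (Pr (A `\` level j r)) <= \int[Pr]_(w in A `\` level j r) Y j w.
  rewrite -Rintegral_cst //; apply: le_Rintegral => //; last first.
    by move=> w [_ /negP]; rewrite -leNgt.
  - exact: Y_integrable.
  - by apply: bounded_mfun_integrable => //; exact: bounded_mfun_cst.
have /andP[k0 k1] := kappa01 j.
have /andP[P0 P1] := fine_probability_bounds Pr mAL.
have := contract FAL; have : 0 <= \int[Pr]_(w in A `&` level j r) Y j w.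
  exact: Rintegral_ge0.
have : 0 <= kappa j ^+ 2 * C by apply: mulr_ge0 => //; exact: sqr_ge0.
nra.
Qed.

Lemma exit_bound m r k :
  r * fine (Pr (~` stay m r k)) + \int[Pr]_(w in stay m r k) Y (m + k) w
  <= y m + C * (S2 (m + k) - S2 m).
Proof.
elim: k => [|k IH].
  by rewrite stay0 setCT measure0 mulr0 add0r addn0 subrr mulr0 addr0.
have eC : ~` stay m r k.+1 = ~` stay m r k `|` (stay m r k `\` level (m + k) r).
  rewrite stayS setCI; apply/seteqP; split => w [h|h]; try by [left | right].
    by have [hs|hs] := pselect (stay m r k w); [right | left].
  by right; case: h.
rewrite eC fine_probabilityU; last 3 first.
- exact/measurableC/measurable_stay.
- by apply: measurableD; [exact: measurable_stay | exact: Fm _ (F_level _ r)].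
- by rewrite setDE setIA setICl set0I.
rewrite stayS addnS /S2 big_ord_recr /= -/(S2 (m + k)) -/(S2 m).
have := exit_step r (F_stay m r k); lra.
Qed.

Lemma exit_probability_le m {r} : 0 < r ->
  (Pr (\bigcup_k ~` stay m r k) <= ((y m + C * (limn S2 - S2 m)) / r)%:E)%E.
Proof.
move=> r0.
have mexit k : measurable (~` stay m r k) by exact/measurableC/measurable_stay.
have cv : (Pr \o (fun k => ~` stay m r k)) @ \oo --> Pr (\bigcup_k ~` stay m r k).
  apply: nondecreasing_cvg_mu => //; first exact: bigcupT_measurable.
  move=> k k' kk'; apply/subsetPset => w /= hk hk'; apply: hk => i ik.
  exact/hk'/(leq_trans ik kk').
rewrite -(cvg_lim _ cv) //; apply: lime_le; first exact: cvgP cv.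
apply: nearW => k /=; rewrite -(fineK (probability_fin_num Pr (mexit k))) lee_fin.
rewrite ler_pdivlMr // mulrC.
have := exit_bound m r k; have := S2_le_lim (m + k).
have : 0 <= \int[Pr]_(w in stay m r k) Y (m + k) w by exact: Rintegral_ge0.
move=> i0 S2k bnd; have := ler_wpM2l C0 S2k; lra.
Qed.

Lemma exit_bound_small {r dl} : 0 < r -> 0 < dl ->
  exists m, (y m + C * (limn S2 - S2 m)) / r <= dl.
Proof.
move=> r0 dl0; set e := dl * r / 2.
have e0 : 0 < e by rewrite divr_gt0 ?mulr_gt0.
have C1 : 0 < C + 1 := ltr_wpDl C0 ltr01.
have [m0 Hm0] := S2_tail (divr_gt0 e0 C1).
have [t m0t yt] := y_small_often m0 e0.
exists t; rewrite ler_pdivrMr //.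
have : C * (limn S2 - S2 t) <= e.
  apply: le_trans (ler_wpM2l C0 (Hm0 t m0t)) _.
  by rewrite mulrA ler_pdivrMr //; nra.
rewrite /e in yt *; lra.
Qed.

Lemma ae_eventually_lt r : 0 < r ->
  \forall w \ae Pr, exists m, forall i, (m <= i)%N -> Y i w < r.
Proof.
move=> r0; pose N := \bigcap_m \bigcup_k ~` stay m r k.
have mN : measurable N.
  apply: bigcapT_measurable => m; apply: bigcupT_measurable => k.
  exact/measurableC/measurable_stay.
have N0 : Pr N = 0%E.
  apply/eqP; rewrite eq_le measure_ge0 andbT; apply/lee_addgt0Pr => dl dl0.
  have [m hm] := exit_bound_small r0 dl0.
  rewrite add0e; apply: (@le_trans _ _ (Pr (\bigcup_k ~` stay m r k))).
    apply: le_measure; rewrite ?inE //; last by move=> w /(_ m I).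
    by apply: bigcupT_measurable => k; exact/measurableC/measurable_stay.
  by apply: le_trans (exit_probability_le m r0) _; rewrite lee_fin.
exists N; split => // w /= notP m _.
have [i mi ri] : exists2 i, (m <= i)%N & ~ Y i w < r.
  apply: contrapT => H; apply: notP; exists m => i mi.
  by apply: contrapT => ?; apply: H; exists i.
by exists (i - m)%N.+1 => //= /(_ (i - m)%N (ltnSn _)); rewrite subnKC.
Qed.

Theorem robbins_siegmund_ae_cvg0 : \forall w \ae Pr, Y t w @[t --> \oo] --> 0.
Proof.
have /ae_foralln : forall n, \forall w \ae Pr,
    exists m, forall i, (m <= i)%N -> Y i w < n.+1%:R^-1.
  by move=> n; apply: ae_eventually_lt; rewrite invr_gt0 ltr0n.
apply: filterS => w Hw; apply/cvgrPdist_lt => eps eps0.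
have [m Hm] := Hw (Num.truncn eps^-1).
exists m => // i /= mi; rewrite sub0r normrN ger0_norm //.
apply: lt_trans (Hm i mi) _.
by rewrite -[X in _ < X](invrK eps) ltf_pV2 ?posrE ?invr_gt0 ?ltr0n ?truncnS_gt.
Qed.

End robbins_siegmund.

Section learning.
Context {R : realType} {d : measure_display} {T : measurableType d}.
Context {Pr : probability T R} {N : nat} {l : 'I_N} {P : 'I_N -> R}
  {c rho1 rho2 pmin M : R} {p1 : T -> R} {v : nat -> T -> R} {kappa : nat -> R}.
Hypotheses (alpha0 : 0 < c * rho1) (pmin01 : 0 <= pmin <= 1)
  (P_le1 : forall k, k != l -> P k <= 1)
  (mp1 : measurable_fun setT p1) (p1_bounds : forall w, pmin <= p1 w <= 1)
  (mv : forall t, measurable_fun setT (v t)) (vM : forall t w, `|v t w| <= M)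
  (kappa01 : forall t, 0 <= kappa t <= 1).

Let p := proc pmin p1 kappa v.
Let G t := g_sigma_preimage (fun i : 'I_t.+1 => p i).

Hypothesis v_le : forall t w, v t w <= 1 - p t w.

Lemma proc_bounds t w : pmin <= p t w <= 1.
Proof.
elim: t w => [|t IH] w; first exact: p1_bounds.
have /andP[pt0 pt1] := IH w; have /andP[k0 k1] := kappa01 t.
have := v_le t w; have /andP[_ pm1] := pmin01.
rewrite /p /= -/p le_max lexx ge_max pm1 /= => vt.
by have := ler_wpM2l k0 vt; nra.
Qed.

Lemma proc01 t w : 0 <= p t w <= 1.
Proof.
have /andP[pt0 pt1] := proc_bounds t w; have /andP[pm0 _] := pmin01.
by rewrite pt1 (le_trans pm0 pt0).
Qed.

Lemma measurable_proc t : measurable_fun setT (p t).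
Proof.
elim: t => [|t IH] //=.
apply: (measurable_maxr (f := cst pmin)); first exact: measurable_cst.
by apply: measurable_funD => //; apply: measurable_funM => //; exact: measurable_cst.
Qed.

Lemma G_measurable {t} : G t `<=` measurable.
Proof.
apply: smallest_sub; first exact: sigma_algebra_measurable.
rewrite -bigcup_mkord_ord => _ [i _] [B mB <-].
exact: measurable_proc.
Qed.

Lemma G_setT t : G t setT.
Proof. exact: (@measurableT _ (g_sigma_algebraType _)). Qed.

Lemma G_setI t : setI_closed (G t).
Proof. move=> A B; exact: (@measurableI _ (g_sigma_algebraType _)). Qed.

Lemma G_preimage t j (B : set R) : (j <= t)%N -> measurable B -> G t (p j @^-1` B).
Proof.
move=> jt mB; apply: sub_sigma_algebra; rewrite -bigcup_mkord_ord.
by exists j => //=; exists B => //; rewrite setTI inordK.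
Qed.

Lemma G_nd t : G t `<=` G t.+1.
Proof.
apply: smallest_sub; first exact: smallest_sigma_algebra.
rewrite -bigcup_mkord_ord => _ [i /= it] [B mB <-].
by rewrite setTI inordK //; apply: G_preimage => //; exact: ltnW.
Qed.

Let beta := beta_l l P rho2.
Let dU := dU_l l P c rho1 rho2.
Let xi t w := v t w - dU (p t w).

Lemma beta_ge0 : 0 <= beta.
Proof. exact: beta_l_ge0. Qed.

Lemma xi_bound t w : `|xi t w| <= M + (2 + beta).
Proof.
exact: le_trans (ler_normB _ _) (lerD (vM t w) (dU_l_bound alpha0 _ beta_ge0 (proc01 t w))).
Qed.

Lemma measurable_xi t : measurable_fun setT (xi t).
Proof.
apply: measurable_funB => //; apply: measurableT_comp (measurable_proc t).
exact: measurable_dU_l.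
Qed.

Hypothesis v_mean : forall t A, G t A ->
  (\int[Pr]_(w in A) (v t w)%:E = \int[Pr]_(w in A) (dU (p t w))%:E)%E.

Lemma bounded_proc t : bounded_mfun (p t).
Proof.
apply: (bounded_mfunP (K := 1) (measurable_proc t)) => w.
by have /andP[pt0 pt1] := proc01 t w; rewrite ger0_norm.
Qed.

Lemma bounded_dU_proc t : bounded_mfun (fun w => dU (p t w)).
Proof.
split; first exact: measurableT_comp measurable_dU_l (measurable_proc t).
by exists (2 + beta) => w; exact: dU_l_bound alpha0 _ beta_ge0 (proc01 t w).
Qed.

Lemma bounded_xi t : bounded_mfun (xi t).
Proof. exact: bounded_mfunP (measurable_xi t) (xi_bound t). Qed.

Lemma Rintegral_xi t A : G t A -> \int[Pr]_(w in A) xi t w = 0.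
Proof.
move=> GA; have mA := G_measurable _ GA.
rewrite RintegralB //; first by rewrite /Rintegral v_mean // subrr.
  exact (bounded_mfun_integrable Pr mA (bounded_mfunP (mv t) (vM t))).
exact (bounded_mfun_integrable Pr mA (bounded_dU_proc t)).
Qed.

Context {pbr : R}.
Hypotheses (pbr_bounds : pmin <= pbr <= 1)
  (pbr_max : forall x, pmin <= x <= 1 -> U_l l P c rho1 rho2 x <= U_l l P c rho1 rho2 pbr).

Let Y t w := (p t w - pbr) ^+ 2.

Lemma proc_step_sqr t w : Y t.+1 w <=
  (1 - kappa t) * Y t w + 2 * kappa t * ((p t w - pbr) * xi t w) + kappa t ^+ 2 * M ^+ 2.
Proof.
rewrite /Y /p /= -/p; apply: le_trans (sqr_maxB_le _ (proj1 (andP pbr_bounds))) _.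
have drift := dU_l_drift alpha0 _ _ beta_ge0 (pbr_max _ (proc_bounds t w)).
have /andP[k0 k1] := kappa01 t.
have vM2 : v t w ^+ 2 <= M ^+ 2.
  by rewrite -real_normK ?num_real // lerXn2r ?nnegrE ?(le_trans _ (vM t w)).
have := ler_wpM2l (mulr_ge0 k0 k0) vM2; have := ler_wpM2l k0 drift.
rewrite /Y /xi /dU !expr2; nra.
Qed.


Lemma proc_dist_le1 t w : `|p t w - pbr| <= 1.
Proof.
have /andP[pt0 pt1] := proc01 t w; have /andP[pb0 pb1] := pbr_bounds.
have /andP[pm0 _] := pmin01.
by rewrite ler_norml; apply/andP; split; lra.
Qed.

Lemma Y_le1 t w : `|Y t w| <= 1.
Proof. by rewrite normrX expr_le1 // proc_dist_le1. Qed.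

Lemma measurable_Y t : measurable_fun setT (Y t).
Proof.
by apply: measurable_funX; apply: measurable_funB; [exact: measurable_proc | exact: measurable_cst].
Qed.

Lemma bounded_Y t : bounded_mfun (Y t).
Proof. by split; [exact: measurable_Y | exists 1; exact: Y_le1]. Qed.

Lemma bounded_drift_noise t : bounded_mfun (fun w => (p t w - pbr) * xi t w).
Proof.
apply: bounded_mfunM (bounded_xi t).
exact: bounded_mfunB (bounded_proc t) (bounded_mfun_cst pbr).
Qed.

Lemma Rintegral_drift_noise t A : G t A ->
  \int[Pr]_(w in A) ((p t w - pbr) * xi t w) = 0.
Proof.
move=> GA; have mA := G_measurable _ GA.
under eq_Rintegral do rewrite mulrBl.
rewrite RintegralB //; first last.
- exact (bounded_mfun_integrable Pr mA
    (bounded_mfunM (bounded_mfun_cst pbr) (bounded_xi t))).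
- exact (bounded_mfun_integrable Pr mA (bounded_mfunM (bounded_proc t) (bounded_xi t))).
rewrite RintegralZl //; last exact (bounded_mfun_integrable Pr mA (bounded_xi t)).
rewrite Rintegral_xi // mulr0 subr0.
apply: (Rintegral_mul_centered Pr (G_setI t) G_measurable (measurable_xi t)
  (xi_bound t) (Rintegral_xi t) (measurable_proc t) (proc01 t) _ GA).
by move=> B mB; exact: G_preimage.
Qed.

Lemma proc_contract t A : G t A ->
  \int[Pr]_(w in A) Y t.+1 w <=
  (1 - kappa t) * \int[Pr]_(w in A) Y t w + kappa t ^+ 2 * M ^+ 2 * fine (Pr A).
Proof.
move=> GA; have mA := G_measurable _ GA.
have bY1 := bounded_mfunM (bounded_mfun_cst (1 - kappa t)) (bounded_Y t).
have bY2 := bounded_mfunM (bounded_mfun_cst (2 * kappa t)) (bounded_drift_noise t).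
have bY12 := bounded_mfunD bY1 bY2.
apply: le_trans (le_Rintegral mA (bounded_mfun_integrable Pr mA (bounded_Y t.+1))
  (bounded_mfun_integrable Pr mA (bounded_mfunD bY12 (bounded_mfun_cst (kappa t ^+ 2 * M ^+ 2))))
  (fun w _ => proc_step_sqr t w)) _.
rewrite RintegralD //; last 2 first.
- exact (bounded_mfun_integrable Pr mA bY12).
- exact (bounded_mfun_integrable Pr mA (bounded_mfun_cst _)).
rewrite RintegralD //; last 2 first.
- exact (bounded_mfun_integrable Pr mA bY1).
- exact (bounded_mfun_integrable Pr mA bY2).
rewrite RintegralZl //; last exact (bounded_mfun_integrable Pr mA (bounded_Y t)).
rewrite RintegralZl //; last exact (bounded_mfun_integrable Pr mA (bounded_drift_noise t)).
by rewrite Rintegral_drift_noise // mulr0 addr0 Rintegral_cst.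
Qed.

Hypotheses (sum_kappa : (fun n => \sum_(k < n) kappa k) @ \oo --> +oo)
  (sum_kappa2 : cvg ((fun n => \sum_(k < n) kappa k ^+ 2) @ \oo)).

Lemma proc_ae_cvg : \forall w \ae Pr, p t w @[t --> \oo] --> pbr.
Proof.
have Y0 t w : 0 <= Y t w := sqr_ge0 _.
have YB t w : Y t w <= 1 := le_trans (ler_norm _) (Y_le1 t w).
have GY t (B : set R) : measurable B -> G t (Y t @^-1` B).
  move=> mB; have msq : measurable_fun setT (fun z : R => (z - pbr) ^+ 2).
    by apply: measurable_funX; apply: measurable_funB;
      [exact: measurable_id | exact: measurable_cst].
  by have := G_preimage t _ _ (leqnn t) (msq measurableT _ mB); rewrite setTI.
apply: filterS (robbins_siegmund_ae_cvg0 Pr G_setT G_setI (@G_measurable) G_nd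
  measurable_Y Y0 YB GY (sqr_ge0 M) kappa01 sum_kappa sum_kappa2 proc_contract).
by move=> w; exact: cvg_sqrB0.
Qed.

End learning.

Theorem theorem6 (R : realType) (d : measure_display) (T : measurableType d)
  (Pr : probability T R)
  (N : nat) (l : 'I_N) (P : 'I_N -> R) (c rho1 rho2 pmin M : R)
  (p1 : T -> R) (v : nat -> T -> R) (kappa : nat -> R) :
  0 < c -> 0 < rho1 -> 0 < rho2 -> 0 < pmin < 1 ->
  (forall k, k != l -> 0 <= P k <= 1) ->
  measurable_fun setT p1 ->
  (forall w, pmin <= p1 w <= 1) ->
  (forall t, measurable_fun setT (v t)) ->
  (forall t w, `|v t w| <= M) ->
  (forall t w, v t w <= 1 - proc pmin p1 kappa v t w) ->
  (* E{ v(t) | p(1), ..., p(t) } = e^{-alpha p(t)} - p(t) beta - p(t) *)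
  (forall t (A : set T),
      g_sigma_preimage (fun i : 'I_t.+1 => proc pmin p1 kappa v i) A ->
      (\int[Pr]_(w in A) (v t w)%:E =
       \int[Pr]_(w in A)
         (expR (- (c * rho1) * proc pmin p1 kappa v t w)
          - proc pmin p1 kappa v t w * beta_l l P rho2
          - proc pmin p1 kappa v t w)%:E)%E) ->
  (forall t, 0 < kappa t <= 1) ->
  (fun n => \sum_(k < n) kappa k) @ \oo --> +oo ->
  cvg ((fun n => \sum_(k < n) kappa k ^+ 2) @ \oo) ->
  forall pbr : R,
    pmin <= pbr <= 1 ->
    (forall p, pmin <= p <= 1 -> U_l l P c rho1 rho2 p <= U_l l P c rho1 rho2 pbr) ->
    {ae Pr, forall w, (fun t => proc pmin p1 kappa v t w) @ \oo --> pbr}.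
Proof.
move=> c0 rho10 _ /andP[pmin0 pmin1] P01 mp1 p1_bounds mv vM v_le v_mean kappa01
  sum_kappa sum_kappa2 pbr pbr_bounds pbr_max.
apply: (proc_ae_cvg (mulr_gt0 c0 rho10) _ _ mp1 p1_bounds mv vM _ v_le v_mean
  pbr_bounds pbr_max sum_kappa sum_kappa2).
- by rewrite !ltW.
- by move=> k /P01 /andP[].
- by move=> t; have /andP[/ltW -> ->] := kappa01 t.
Qed.
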